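(* Let $S$ be a qubit with Hamiltonian $H_S=E|1\rangle\langle1|$, $E>0$, let $\beta>0$, and assume the initial state $\rho_S^{(0)}$ is diagonal in the energy eigenbasis with $p^{(0)}_0\ge p^{(0)}_1$. Let $B$ be a single bosonic mode with energy levels $nE$, $n=0,1,2,\dots$, initially in the thermal state $\tau_B=(1-e^{-\beta E})\sum_{n=0}^\infty e^{-n\beta E}|n\rangle\langle n|$. Consider the protocol starting from $\rho^{(0)}_S\otimes\tau_B$ in which, in each round $k$, (1) the unitary $X\otimes\mathbb{I}$ ($X$ the Pauli $X$) is applied to the system–bath state $\rho_{SB}^{(k-1)}$ after round $k-1$, and (2) the unitary $U^\beta_{SB}=|0,0\rangle\langle0,0|+\sum_{n=1}^\infty(|0,n\rangle\langle1,n-1|+|1,n-1\rangle\langle0,n|)$ is then applied, without ever refreshing $B$. Then this protocol is an optimal protocol in $\mathcal{P}_\emptyset$: for every $k$, the ground state population $\langle 0|\mathrm{tr}_B[\rho_{SB}^{(k)}]|0\rangle$ equals the maximum of $p_0^{(k)}$ over all $k$-round protocols in $\mathcal{P}_\emptyset$.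
   Context: A dephasing thermalization on $S$ is a quantum channel $\Lambda$ with $\Lambda(\tau_S)=\tau_S$, where $\tau_S=e^{-\beta H_S}/\mathrm{tr}[e^{-\beta H_S}]$, and $\langle 0|\Lambda(\rho)|1\rangle=0$ for all $\rho$. The protocol class $\mathcal{P}_\emptyset$: each round $k$ consists of an arbitrary unitary on $S$ followed by an arbitrary dephasing thermalization on $S$, producing $\rho_S^{(k)}$ from $\rho_S^{(k-1)}$; $p_0^{(k)}=\langle0|\rho_S^{(k)}|0\rangle$. States $|s,n\rangle=|s\rangle_S\otimes|n\rangle_B$. *)

From HB Require Import structures.
From mathcomp Require Import all_boot all_order all_algebra.
From mathcomp Require Import all_classical all_reals all_analysis.
From mathcomp.real_closed Require Import complex.

Set Implicit Arguments.
Unset Strict Implicit.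
Unset Printing Implicit Defensive.

Import Order.TTheory GRing.Theory Num.Theory numFieldNormedType.Exports.
Local Open Scope ring_scope.
Local Open Scope complex_scope.

Section Qubit.
Variable R : realType.

(* 2x2 complex matrices = operators on the qubit S; index 0 = |0>, 1 = |1>. *)
Definition qmat := 'M[R[i]]_2.

Definition adj (A : qmat) : qmat := \matrix_(i < 2, j < 2) (A j i)^*.

Definition unitary (U : qmat) : Prop := adj U *m U = 1%:M.

(* density matrices: positive semidefinite (for all v, v^dag rho v >= 0 in
   the partial order of R[i], i.e. real and nonnegative) with unit trace *)
Definition density (rho : qmat) : Prop :=
  (forall v : 'cV[R[i]]_2, 0 <= ((\matrix_(i < 1, j < 2) (v j 0)^*) *m rho *m v) 0 0)
  /\ \tr rho = 1.

(* a quantum channel (CPTP map) on S, given by a finite Kraus family *)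
Definition kraus_apply (Ks : seq qmat) (rho : qmat) : qmat :=
  \sum_(K <- Ks) (K *m rho *m adj K).
Definition is_channel (Ks : seq qmat) : Prop :=
  \sum_(K <- Ks) (adj K *m K) = 1%:M.

(* the Gibbs state of H_S = E |1><1| at inverse temperature beta:
   tau_S = e^{-beta H_S} / tr e^{-beta H_S} = diag(1, e^{-beta E}) / (1 + e^{-beta E}) *)
Definition gibbs_qubit (E beta : R) : qmat :=
  let q := expR (- (beta * E)) in
  \matrix_(i < 2, j < 2)
    (if i == j then (if i == 0 then (1 / (1 + q))%:C else (q / (1 + q))%:C)
     else 0).

Definition dephasing_thermalization (E beta : R) (Ks : seq qmat) : Prop :=
  [/\ is_channel Ks,
      kraus_apply Ks (gibbs_qubit E beta) = gibbs_qubit E beta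
    & forall rho, density rho -> kraus_apply Ks rho 0 1 = 0].

Definition P_empty_protocol (E beta : R) (k : nat)
    (Us : nat -> qmat) (Ls : nat -> seq qmat) : Prop :=
  forall i, (i < k)%N -> unitary (Us i) /\ dephasing_thermalization E beta (Ls i).

Fixpoint run_protocol (Us : nat -> qmat) (Ls : nat -> seq qmat)
    (rho0 : qmat) (k : nat) : qmat :=
  match k with
  | 0 => rho0
  | k'.+1 => kraus_apply (Ls k')
               (Us k' *m run_protocol Us Ls rho0 k' *m adj (Us k'))
  end.

Definition diag_state (p0 p1 : R) : qmat :=
  \matrix_(i < 2, j < 2)
    (if i == j then (if i == 0 then p0%:C else p1%:C) else 0).

(* ---------------- the bath protocol ----------------
   Basis of S (x) B: |s, n>, s : bool (false = |0>, true = |1>), n : nat.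
   Every state occurring in the bath protocol is diagonal in this basis
   (the initial state rho_S^(0) (x) tau_B is, and X (x) I and U^beta_SB
   permute basis vectors), so it is represented by its populations
   f : bool * nat -> R.  A basis-permuting unitary U with U|x> = |sigma x>
   maps the diagonal state with populations f to the one with populations
   f o sigma^{-1}. *)

Definition X_basis (x : bool * nat) : bool * nat := (~~ x.1, x.2).

Definition U_basis (x : bool * nat) : bool * nat :=
  match x with
  | (false, 0) => (false, 0)
  | (false, n.+1) => (true, n)
  | (true, n) => (false, n.+1)
  end.

Lemma X_basis_invol x : X_basis (X_basis x) = x.
Proof. by case: x => [[] n]. Qed.

Lemma U_basis_invol x : U_basis (U_basis x) = x.
Proof. by case: x => [[] [|n]]. Qed.

Definition perm_act (sigma_inv : bool * nat -> bool * nat)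
    (f : bool * nat -> R) : bool * nat -> R := fun y => f (sigma_inv y).

(* initial populations of rho_S^(0) (x) tau_B, with
   tau_B = (1 - e^{-beta E}) sum_n e^{-n beta E} |n><n| *)
Definition bath_init (E beta p0 p1 : R) (x : bool * nat) : R :=
  let q := expR (- (beta * E)) in
  (if x.1 then p1 else p0) * ((1 - q) * q ^+ x.2).

(* rho_SB^(k): each round applies X (x) I, then U^beta_SB (both involutions,
   so sigma_inv = sigma) *)
Fixpoint bath_run (E beta p0 p1 : R) (k : nat) : bool * nat -> R :=
  match k with
  | 0 => bath_init E beta p0 p1
  | k'.+1 => perm_act U_basis (perm_act X_basis (bath_run E beta p0 p1 k'))
  end.

(* <0| tr_B rho_SB^(k) |0> = sum_{n >= 0} <0,n| rho_SB^(k) |0,n> *)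
Definition bath_ground_pop (E beta p0 p1 : R) (k : nat) : R :=
  limn (fun N : nat => (\sum_(0 <= n < N) bath_run E beta p0 p1 k (false, n) : R)).

End Qubit.

From HB Require Import structures.
From mathcomp Require Import all_boot all_order all_algebra.
From mathcomp Require Import all_classical all_reals all_analysis.
From mathcomp.real_closed Require Import complex.
From mathcomp Require Import ring.
Import Order.TTheory GRing.Theory Num.Theory numFieldNormedType.Exports.
Local Open Scope ring_scope.
Local Open Scope complex_scope.

(* Write q = e^{-beta E}, so the Gibbs state is proportional to diag(1, q).
   If a Gibbs-preserving channel L is applied to s >= m I with m >= 0, the
   splitting s = (s - m diag(1, q)) + m diag(1, q) into positive parts gives
   L(s) >= m diag(1, q) >= q m I.  Unitaries preserve s >= m I, and
   rho^(0) >= p1 I because p0 >= p1; hence after k rounds of any protocol the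
   excited population is at least q^k p1, i.e. p_0^(k) <= 1 - q^k p1.
   Alternating X with the dephasing thermalization
   diag(a, b) |-> diag(b + (1 - q) a, q a) attains this bound.  In the bath
   protocol the ground populations move one rung up the ladder each round while
   the lowest excited population p1 (1 - q) q^k enters |0,0>, so the ground
   population of S after k rounds is p0 + p1 (1 - q^k) = 1 - q^k p1 as well. *)

Section QubitThermalization.
Context {R : realType}.

Lemma lift0_ord1 : lift ord0 ord0 = 1 :> 'I_2.
Proof. exact: val_inj. Qed.

Ltac qmat_entrywise :=
  apply/matrixP; case=> [[|[|//]] ?]; case=> [[|[|//]] ?]; rewrite !mxE /=.

Section PositiveOperators.
Implicit Types (A B U : qmat R) (v : 'cV[R[i]]_2) (Ks : seq (qmat R)).

Definition bra v : 'rV[R[i]]_2 := \matrix_(i < 1, j < 2) (v j 0)^*.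

Definition psd A : Prop := forall v, 0 <= (bra v *m A *m v) 0 0.

Lemma bra_adj B v : bra (adj B *m v) = bra v *m B.
Proof.
apply/matrixP => i j; rewrite !mxE rmorph_sum; apply: eq_bigr => k _.
by rewrite !mxE rmorphM /= conjcK mulrC.
Qed.

Lemma psd_conj A B : psd A -> psd (B *m A *m adj B).
Proof.
move=> hA v.
by have -> : bra v *m (B *m A *m adj B) *m v = bra (adj B *m v) *m A *m (adj B *m v)
  by rewrite bra_adj !mulmxA.
Qed.

Lemma psdD A B : psd A -> psd B -> psd (A + B).
Proof. by move=> hA hB v; rewrite mulmxDr mulmxDl mxE addr_ge0. Qed.

Lemma psd_kraus Ks A : psd A -> psd (kraus_apply Ks A).
Proof.
move=> hA; rewrite /kraus_apply; elim: Ks => [|K Ks IH].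
  by rewrite big_nil => v; rewrite mulmx0 mul0mx mxE.
by rewrite big_cons; apply: psdD => //; apply: psd_conj.
Qed.

Lemma bra_mx_ket v A : (bra v *m A *m v) 0 0 =
  (v 0 0)^* * A 0 0 * v 0 0 + (v 0 0)^* * A 0 1 * v 1 0 +
  (v 1 0)^* * A 1 0 * v 0 0 + (v 1 0)^* * A 1 1 * v 1 0.
Proof.
rewrite !mxE !big_ord_recl !big_ord0 !mxE !big_ord_recl !big_ord0 !mxE /=.
by rewrite lift0_ord1; ring.
Qed.

Lemma psd_diag_state (a b : R) : 0 <= a -> 0 <= b -> psd (diag_state a b).
Proof.
move=> ha hb v; rewrite bra_mx_ket !mxE /= !mulr0 !mul0r !addr0.
have sandwich (x c : R[i]) : x^* * c * x = c * (x * x^*) by ring.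
by rewrite !sandwich addr_ge0 // mulr_ge0 ?ler0c ?mulcJ_ge0.
Qed.

Lemma psd_mx11_ge0 A : psd A -> 0 <= A 1 1.
Proof.
move=> /(_ (\col_i (i == 1)%:R)); rewrite bra_mx_ket !mxE /=.
by rewrite conjC0 conjC1 !mul0r !mulr0 !add0r mul1r mulr1.
Qed.

Lemma mxtrace2 A : \tr A = A 0 0 + A 1 1.
Proof. by rewrite /mxtrace !big_ord_recl big_ord0 addr0 lift0_ord1. Qed.

Lemma mxtrace_kraus Ks A : is_channel Ks -> \tr (kraus_apply Ks A) = \tr A.
Proof.
rewrite /is_channel /kraus_apply => hK.
rewrite -[in RHS](mul1mx A) -hK mulmx_suml !raddf_sum; apply: eq_bigr => K _.
exact: etrans (mxtrace_mulC _ _) (congr1 _ (mulmxA _ _ _)).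
Qed.

Lemma kraus_applyD Ks A B :
  kraus_apply Ks (A + B) = kraus_apply Ks A + kraus_apply Ks B.
Proof.
by rewrite /kraus_apply -big_split; apply: eq_bigr => K _; rewrite mulmxDr mulmxDl.
Qed.

Lemma kraus_applyZ Ks (c : R[i]) A :
  kraus_apply Ks (c *: A) = c *: kraus_apply Ks A.
Proof.
rewrite /kraus_apply scaler_sumr; apply: eq_bigr => K _.
by rewrite -scalemxAr -scalemxAl.
Qed.

Lemma mxtrace_unitary_conj U A : unitary U -> \tr (U *m A *m adj U) = \tr A.
Proof. by move=> hU; rewrite mxtrace_mulC mulmxA hU mul1mx. Qed.

Lemma psd_unitary_conj_shift U A (m : R[i]) :
  unitary U -> psd (A - m%:M) -> psd (U *m A *m adj U - m%:M).
Proof.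
move=> /mulmx1C hU hA.
suff -> : U *m A *m adj U - m%:M = U *m (A - m%:M) *m adj U by apply: psd_conj.
by rewrite mulmxBr mulmxBl mul_mx_scalar -scalemxAl hU -mul_scalar_mx mulmx1.
Qed.

End PositiveOperators.

Section ThermalBound.
Implicit Types (a b c d m q : R) (Ks : seq (qmat R)) (A : qmat R).

Lemma scalar_diag_state m : (m%:C)%:M = diag_state m m :> qmat R.
Proof. by qmat_entrywise; rewrite ?mulr1n ?mulr0n. Qed.

Lemma diag_stateD a b c d :
  diag_state a b + diag_state c d = diag_state (a + c) (b + d) :> qmat R.
Proof. by qmat_entrywise; rewrite ?addr0 ?rmorphD. Qed.

Lemma diag_stateN a b : - diag_state a b = diag_state (- a) (- b) :> qmat R.
Proof. by qmat_entrywise; rewrite ?oppr0 ?rmorphN. Qed.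

Lemma diag_stateZ c a b : c%:C *: diag_state a b = diag_state (c * a) (c * b) :> qmat R.
Proof. by qmat_entrywise; rewrite ?mulr0 ?rmorphM. Qed.

Lemma diag_stateB a b c d :
  diag_state a b - diag_state c d = diag_state (a - c) (b - d) :> qmat R.
Proof. by rewrite diag_stateN diag_stateD. Qed.

Lemma gibbs_qubitE (E beta : R) :
  let q := expR (- (beta * E)) in
  gibbs_qubit E beta = diag_state (1 / (1 + q)) (q / (1 + q)).
Proof. by []. Qed.

Lemma psd_kraus_shift q m Ks A :
  0 <= q <= 1 -> 0 <= m ->
  kraus_apply Ks (diag_state 1 q) = diag_state 1 q ->
  psd (A - (m%:C)%:M) -> psd (kraus_apply Ks A - ((q * m)%:C)%:M).
Proof.
move=> /andP[q_ge0 q_le1] m_ge0 hfix hA.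
have gap_ge0 : 0 <= m - q * m by rewrite subr_ge0 ler_piMl.
set D := (m%:C *: diag_state 1 q : qmat R).
have hAD : A - D = (A - (m%:C)%:M) + diag_state 0 (m - q * m).
  rewrite -addrA scalar_diag_state /D diag_stateZ !diag_stateN diag_stateD.
  by congr (A + diag_state _ _); ring.
have -> : kraus_apply Ks A - ((q * m)%:C)%:M
    = kraus_apply Ks (A - D) + diag_state (m - q * m) 0.
  rewrite -[A in kraus_apply Ks A](subrK D) (kraus_applyD _ (A - D)) /D kraus_applyZ hfix.
  rewrite -addrA diag_stateZ scalar_diag_state diag_stateB.
  by congr (_ + diag_state _ _); ring.
apply: psdD; last exact: psd_diag_state.
by rewrite hAD; apply/psd_kraus/psdD => //; apply: psd_diag_state.
Qed.

End ThermalBound.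

Lemma boltzmann_factor_lt1 (E beta : R) :
  0 < E -> 0 < beta -> expR (- (beta * E)) < 1.
Proof. by move=> E_gt0 beta_gt0; rewrite -expR0 ltr_expR oppr_lt0 mulr_gt0. Qed.

Section ProtocolBound.
Variables (E beta : R).
Hypotheses (E_gt0 : 0 < E) (beta_gt0 : 0 < beta).
Local Notation q := (expR (- (beta * E))).

Lemma gibbs_fixed_diag_state Ks :
  kraus_apply Ks (gibbs_qubit E beta) = gibbs_qubit E beta ->
  kraus_apply Ks (diag_state 1 q) = diag_state 1 q.
Proof.
have q1_neq0 : 1 + q != 0 by rewrite lt0r_neq0 // addr_gt0 ?expR_gt0.
have -> : diag_state 1 q = (1 + q)%:C *: gibbs_qubit E beta.
  by rewrite gibbs_qubitE diag_stateZ; congr diag_state; field.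
by rewrite kraus_applyZ => ->.
Qed.

Lemma run_protocol_invariant k Us Ls (rho0 : qmat R) (m : R) :
  0 <= m -> \tr rho0 = 1 -> psd (rho0 - (m%:C)%:M) ->
  P_empty_protocol E beta k Us Ls ->
  forall j, (j <= k)%N ->
    \tr (run_protocol Us Ls rho0 j) = 1 /\
    psd (run_protocol Us Ls rho0 j - ((q ^+ j * m)%:C)%:M).
Proof.
move=> m_ge0 tr_rho0 psd_rho0 hP; elim=> [_|j IH lt_jk] /=; first by rewrite mul1r.
have [[hU [hchan hgibbs _]] [tr_j psd_j]] := (hP j lt_jk, IH (ltnW lt_jk)).
split; first by rewrite mxtrace_kraus // mxtrace_unitary_conj.
rewrite exprS -mulrA; apply: psd_kraus_shift.
- by rewrite expR_ge0 ltW // boltzmann_factor_lt1.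
- by rewrite mulr_ge0 // exprn_ge0 ?expR_ge0.
- exact: gibbs_fixed_diag_state.
- exact: psd_unitary_conj_shift.
Qed.
Arguments run_protocol_invariant {k Us Ls rho0 m}.

Lemma run_protocol_ground_pop_le k Us Ls (p0 p1 : R) :
  0 <= p1 -> p1 <= p0 -> p0 + p1 = 1 ->
  P_empty_protocol E beta k Us Ls ->
  run_protocol Us Ls (diag_state p0 p1) k 0 0 <= (1 - q ^+ k * p1)%:C.
Proof.
move=> p1_ge0 p1_le_p0 p_sum hP.
have tr_rho0 : \tr (diag_state p0 p1) = 1 by rewrite mxtrace2 !mxE -rmorphD p_sum.
have psd_rho0 : psd (diag_state p0 p1 - (p1%:C)%:M).
  by rewrite scalar_diag_state diag_stateB subrr; apply: psd_diag_state; rewrite ?subr_ge0.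
have [tr_k psd_k] := run_protocol_invariant p1_ge0 tr_rho0 psd_rho0 hP k (leqnn k).
move/psd_mx11_ge0: psd_k; rewrite !mxE /= mulr1n subr_ge0 => excited_ge.
by rewrite rmorphB rmorph1 -tr_k mxtrace2 -addrA lerDl subr_ge0.
Qed.

End ProtocolBound.

Section AlternatingProtocol.
Variable q : R.
Hypotheses (q_ge0 : 0 <= q) (q_le1 : q <= 1).

Definition pauliX : qmat R := \matrix_(i, j) (i != j)%:R.

Definition thermal_kraus : seq (qmat R) :=
  [:: \matrix_(i, j) ((i == 0) && (j == 1))%:R;
      \matrix_(i, j) (((i == 0) && (j == 0))%:R * Num.sqrt (1 - q))%:C;
      \matrix_(i, j) (((i == 1) && (j == 0))%:R * Num.sqrt q)%:C].

Ltac qmat_product :=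
  apply/matrixP; case=> [[|[|//]] ?]; case=> [[|[|//]] ?];
  rewrite !mxE; do ! rewrite !big_ord_recl !big_ord0 !mxE;
  rewrite ?conjc_nat ?conjc_real /= ?lift0_ord1;
  rewrite ?(mul0r, mulr0, mul1r, mulr1, add0r, addr0, rmorph0).

Lemma pauliX_unitary : unitary pauliX.
Proof. by rewrite /unitary; qmat_product. Qed.

Lemma pauliX_conj_diag_state (a b : R) :
  pauliX *m diag_state a b *m adj pauliX = diag_state b a.
Proof. by qmat_product. Qed.

Lemma thermal_kraus_apply A :
  kraus_apply thermal_kraus A = \matrix_(i, j)
    (if i == j then if i == 0 then A 1 1 + (1 - q)%:C * A 0 0 else q%:C * A 0 0
     else 0).
Proof.
rewrite /kraus_apply !big_cons big_nil.
have sqrt_sandwich x : 0 <= x -> (Num.sqrt x)%:C * A 0 0 * (Num.sqrt x)%:C = x%:C * A 0 0.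
  by move=> x_ge0; rewrite mulrAC -rmorphM -expr2 sqr_sqrtr // mulrC.
by qmat_product; rewrite ?sqrt_sandwich ?subr_ge0.
Qed.

Lemma thermal_kraus_diag_state (a b : R) :
  kraus_apply thermal_kraus (diag_state a b) = diag_state (b + (1 - q) * a) (q * a).
Proof. by rewrite thermal_kraus_apply; qmat_entrywise; rewrite -?rmorphM -?rmorphD. Qed.

Lemma thermal_kraus_channel : is_channel thermal_kraus.
Proof.
rewrite /is_channel !big_cons big_nil.
by qmat_product; rewrite -?rmorphM -?expr2 ?sqr_sqrtr ?subr_ge0 // -?rmorphD ?subrK.
Qed.

Lemma thermal_kraus_dephasing E beta :
  q = expR (- (beta * E)) -> dephasing_thermalization E beta thermal_kraus.
Proof.
move=> q_def; have q1_neq0 : 1 + q != 0 by rewrite lt0r_neq0 // ltr_pwDl.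
split; first exact: thermal_kraus_channel.
- rewrite gibbs_qubitE -q_def thermal_kraus_diag_state.
  by congr diag_state; field.
- by move=> rho _; rewrite thermal_kraus_apply mxE.
Qed.

Lemma run_alternating_protocol (p : R) j :
  run_protocol (fun=> pauliX) (fun=> thermal_kraus) (diag_state (1 - p) p) j =
  diag_state (1 - q ^+ j * p) (q ^+ j * p).
Proof.
elim: j => [|j IH] /=; first by rewrite mul1r.
rewrite IH pauliX_conj_diag_state thermal_kraus_diag_state exprS.
by congr diag_state; ring.
Qed.

End AlternatingProtocol.

Section BathProtocol.
Variables (E beta p0 p1 : R).
Local Notation q := (expR (- (beta * E))).

Lemma bath_run_excited k n :
  bath_run E beta p0 p1 k (true, n) = p1 * ((1 - q) * q ^+ (n + k)).
Proof. by elim: k n => [|k IH] n; rewrite ?addn0 // [LHS]IH addSnnS. Qed.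

Lemma bath_ground_partial_sum k N :
  \sum_(0 <= n < N + k) bath_run E beta p0 p1 k (false, n)
    = p1 * (1 - q ^+ k) + p0 * (1 - q ^+ N).
Proof.
elim: k => [|k IH].
  rewrite addn0 subrr mulr0 add0r big_mkord -!mulr_sumr.
  by rewrite -opprB mulNr -subrX1 opprB.
by rewrite addnS big_nat_recl //= IH /perm_act /= bath_run_excited add0n exprS; ring.
Qed.

Lemma bath_ground_pop_closed k :
  0 < E -> 0 < beta -> p0 + p1 = 1 ->
  bath_ground_pop E beta p0 p1 k = 1 - q ^+ k * p1.
Proof.
move=> E_gt0 beta_gt0 p_sum.
have q_norm_lt1 : `|q| < 1.
  by rewrite gtr0_norm ?expR_gt0 // boltzmann_factor_lt1.
have -> : 1 - q ^+ k * p1 = p1 * (1 - q ^+ k) + p0 * (1 - 0).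
  by rewrite -(addrK p1 p0) p_sum; ring.
apply: cvg_lim => //; rewrite -(cvg_shiftn k) /=.
under eq_fun do rewrite bath_ground_partial_sum.
exact: cvgD (cvg_cst _) (cvgM (cvg_cst _) (cvgB (cvg_cst _) (cvg_expr q_norm_lt1))).
Qed.

End BathProtocol.

End QubitThermalization.

Theorem theorem2 (R : realType) (E beta p0 p1 : R) :
  0 < E -> 0 < beta -> 0 <= p1 -> p1 <= p0 -> p0 + p1 = 1 ->
  forall k : nat,
    (exists (Us : nat -> qmat R) (Ls : nat -> seq (qmat R)),
        P_empty_protocol E beta k Us Ls /\
        run_protocol Us Ls (diag_state p0 p1) k 0 0
          = (bath_ground_pop E beta p0 p1 k)%:C) /\
    (forall (Us : nat -> qmat R) (Ls : nat -> seq (qmat R)),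
        P_empty_protocol E beta k Us Ls ->
        run_protocol Us Ls (diag_state p0 p1) k 0 0
          <= (bath_ground_pop E beta p0 p1 k)%:C).
Proof.
move=> E_gt0 beta_gt0 p1_ge0 p1_le_p0 p_sum k.
rewrite bath_ground_pop_closed //.
split; last by move=> Us Ls; apply: run_protocol_ground_pop_le.
have q_ge0 := expR_ge0 (- (beta * E)).
have q_le1 : expR (- (beta * E)) <= 1 by rewrite ltW // boltzmann_factor_lt1.
exists (fun=> pauliX), (fun=> thermal_kraus (expR (- (beta * E)))); split.
  move=> i _; split; first exact: pauliX_unitary.
  exact: thermal_kraus_dephasing.
have -> : p0 = 1 - p1 by rewrite -p_sum addrK.
by rewrite run_alternating_protocol // !mxE.
Qed.
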